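(* Let $\mathcal{P},\mathcal{Q}\in\mathbb{R}[\xi]^{\ell\times n}$ be two real matrix polynomials of the same size. Then there exist unimodular matrix polynomials $\mathcal{U}\in\mathbb{R}[\xi]^{\ell\times\ell}$ and $\mathcal{V}\in\mathbb{R}[\xi]^{n\times n}$, nonnegative integers $r_P,m,q,r_1,\dots,r_q,s_1,\dots,s_q$ with $r_P+m+r_1+\dots+r_q=n$ and $r_P+r_1+\dots+r_q+s_1+\dots+s_q=\ell$, such that the following holds. Partition the columns of $\mathcal{U}\mathcal{P}\mathcal{V}$ and $\mathcal{U}\mathcal{Q}\mathcal{V}$ into consecutive groups $C_P, C_0, C_1,\dots,C_q$ of sizes $r_P,m,r_1,\dots,r_q$, and partition their rows into consecutive groups $R_P,R_1,\dots,R_q,S_1,\dots,S_q$ of sizes $r_P,r_1,\dots,r_q,s_1,\dots,s_q$. Denote by $X[R,C]$ the block of a matrix $X$ in row group $R$ and column group $C$. Then: (a) $(\mathcal{U}\mathcal{P}\mathcal{V})[R_P,C_P]=\Sigma_P$, $(\mathcal{U}\mathcal{P}\mathcal{V})[R_P,C_0]=0$; for every $a$, the blocks of $\mathcal{U}\mathcal{P}\mathcal{V}$ in rows $R_a$ and in rows $S_a$ vanish in the columns $C_P$, $C_0$ and $C_b$ for all $b\le a$ (the blocks in columns $C_b$, $b>a$, and all blocks of row group $R_P$ in columns $C_1,\dots,C_q$ are arbitrary); (b) $(\mathcal{U}\mathcal{Q}\mathcal{V})[R_P,C_P]=\mathcal{Q}_{11}$, $(\mathcal{U}\mathcal{Q}\mathcal{V})[R_P,C_0]=\mathcal{Q}_{12}$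 (arbitrary); for every $a$, the blocks of $\mathcal{U}\mathcal{Q}\mathcal{V}$ in rows $R_a$ vanish in the columns $C_P,C_0$ and $C_b$ for $b<a$, and $(\mathcal{U}\mathcal{Q}\mathcal{V})[R_a,C_a]=\Sigma_a$; the blocks in rows $S_a$ vanish in the columns $C_P,C_0$ and $C_b$ for all $b\le a$ (all remaining blocks are arbitrary). Here $\Sigma_P$ is an $r_P\times r_P$ diagonal matrix polynomial and each $\Sigma_a$ is an $r_a\times r_a$ diagonal matrix polynomial $\mathrm{diag}(p_{a,1},\dots,p_{a,r_a})$, all diagonal entries being monic polynomials.
   Context: A square matrix polynomial $\mathcal{M}\in\mathbb{R}[\xi]^{k\times k}$ is called unimodular if $\det \mathcal{M}$ is a nonzero constant. A scalar polynomial is monic if its leading coefficient is $1$. Block groups of size zero are allowed. *)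

From HB Require Import structures.
From mathcomp Require Import all_boot all_order all_algebra.
From mathcomp Require Import reals.
Set Implicit Arguments. Unset Strict Implicit. Unset Printing Implicit Defensive.
Import Order.TTheory GRing.Theory Num.Theory.
Local Open Scope ring_scope.

Definition unimodular (R : comNzRingType) (k : nat) (M : 'M[{poly R}]_k) : Prop :=
  exists c : R, c != 0 /\ \det M = c%:P.

(* Consecutive groups of sizes given by s (possibly of size 0):
   blk s k = index (0-based) of the group containing position k,
   boff s k = offset of k inside that group. *)
Fixpoint blk (s : seq nat) (k : nat) : nat :=
  match s with
  | [::] => 0
  | x :: s' => if (k < x)%N then 0%N else (blk s' (k - x)).+1
  end.

Fixpoint boff (s : seq nat) (k : nat) : nat :=
  match s with
  | [::] => k
  | x :: s' => if (k < x)%N then k else boff s' (k - x)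
  end.

(* Row groups R_P, R_a, S_a (with a 0-based, plus the offset inside the group). *)
Inductive rgroup := RowP of nat | RowR of nat & nat | RowS of nat & nat.
Inductive cgroup := ColP of nat | Col0 | ColC of nat & nat.

Definition row_group (rP : nat) (rs ss : seq nat) (i : nat) : rgroup :=
  if (i < rP)%N then RowP i
  else if (i - rP < sumn rs)%N then RowR (blk rs (i - rP)) (boff rs (i - rP))
  else RowS (blk ss (i - rP - sumn rs)) (boff ss (i - rP - sumn rs)).

Definition col_group (rP m : nat) (rs : seq nat) (j : nat) : cgroup :=
  if (j < rP)%N then ColP j
  else if (j < rP + m)%N then Col0
  else ColC (blk rs (j - rP - m)) (boff rs (j - rP - m)).

Definition diag_monic_entry (R : nzRingType) (p : {poly R}) (o1 o2 : nat) : bool :=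
  if o1 == o2 then p \is monic else p == 0.

Definition P_form (R : nzRingType) (l n : nat) (rP m : nat) (rs ss : seq nat)
  (A : 'M[{poly R}]_(l, n)) : Prop :=
  forall (i : 'I_l) (j : 'I_n),
  match row_group rP rs ss i, col_group rP m rs j with
  | RowP o1, ColP o2 => is_true (diag_monic_entry (A i j) o1 o2)
  | RowP _, Col0 => A i j = 0
  | RowP _, ColC _ _ => True
  | RowR _ _, ColP _ | RowR _ _, Col0 => A i j = 0
  | RowR a _, ColC b _ => (b <= a)%N -> A i j = 0
  | RowS _ _, ColP _ | RowS _ _, Col0 => A i j = 0
  | RowS a _, ColC b _ => (b <= a)%N -> A i j = 0
  end.

Definition Q_form (R : nzRingType) (l n : nat) (rP m : nat) (rs ss : seq nat)
  (B : 'M[{poly R}]_(l, n)) : Prop :=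
  forall (i : 'I_l) (j : 'I_n),
  match row_group rP rs ss i, col_group rP m rs j with
  | RowP _, _ => True
  | RowR _ _, ColP _ | RowR _ _, Col0 => B i j = 0
  | RowR a o1, ColC b o2 =>
      if (b < a)%N then B i j = 0
      else if b == a then is_true (diag_monic_entry (B i j) o1 o2) else True
  | RowS _ _, ColP _ | RowS _ _, Col0 => B i j = 0
  | RowS a _, ColC b _ => (b <= a)%N -> B i j = 0
  end.

(* Over F[x], Euclidean elimination makes every matrix equivalent to a monic
   diagonal one.  The pair (P, Q) is reduced by induction on l + n.  First
   diagonalize P.  If P has full row rank we are done with rP = l.  Otherwise
   the last rows of P vanish, and diagonalizing the same rows of Q (row
   operations on them alone, column operations on everything, which keeps the
   zero rows of P zero) yields a monic diagonal block of some size k: its rows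
   and columns become the last groups R_(q+1) and C_(q+1), the remaining zero
   rows the group S_(q+1).  The blocks of P and Q in the other rows and
   columns are reduced recursively, and a permutation of rows and columns
   moves the new groups to their prescribed places. *)

From mathcomp Require Import all_boot all_order all_algebra all_fingroup zify.
From mathcomp Require Import reals.

Set Implicit Arguments.
Unset Strict Implicit.
Unset Printing Implicit Defensive.

Import GRing.Theory.
Local Open Scope ring_scope.

Section Equivalence.
Variable R : comUnitRingType.

Definition equivalent m n (M N : 'M[R]_(m, n)) :=
  exists L U, [/\ L \in unitmx, U \in unitmx & L *m M *m U = N].

Lemma equivalent_refl m n (M : 'M[R]_(m, n)) : equivalent M M.
Proof. by exists 1%:M, 1%:M; rewrite mul1mx mulmx1 !unitmx1. Qed.

Lemma equivalent_trans m n (M N K : 'M[R]_(m, n)) :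
  equivalent M N -> equivalent N K -> equivalent M K.
Proof.
move=> [L1 [U1 [uL1 uU1 <-]]] [L2 [U2 [uL2 uU2 <-]]].
exists (L2 *m L1), (U1 *m U2); rewrite !unitmx_mul uL1 uU1 uL2 uU2.
by split=> //; rewrite !mulmxA.
Qed.

Lemma equivalent_tr m n (M N : 'M[R]_(m, n)) : equivalent M N -> equivalent M^T N^T.
Proof.
move=> [L [U [uL uU <-]]]; exists U^T, L^T; rewrite !unitmx_tr uL uU.
by rewrite !trmx_mul mulmxA.
Qed.

Lemma equivalent_block_diag m1 m2 n1 n2 (A A' : 'M[R]_(m1, n1))
  (B B' : 'M[R]_(m2, n2)) : equivalent A A' -> equivalent B B' ->
  equivalent (block_mx A 0 0 B) (block_mx A' 0 0 B').
Proof.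
move=> [L1 [U1 [uL1 uU1 <-]]] [L2 [U2 [uL2 uU2 <-]]].
exists (block_mx L1 0 0 L2), (block_mx U1 0 0 U2).
rewrite !unitmxE !det_ublock !unitrM -!unitmxE uL1 uL2 uU1 uU2.
by split=> //; rewrite !mulmx_block !(mulmx0, mul0mx, addr0, add0r).
Qed.

Lemma unitmx_add_delta n (c : R) (j0 j : 'I_n) :
  j0 != j -> 1%:M + c *: delta_mx j0 j \in unitmx.
Proof.
move=> nj; have [] // := @mulmx1_unit _ _ (1%:M + c *: delta_mx j0 j)
  (1%:M - c *: delta_mx j0 j).
rewrite mulmxDl !mulmxBr !mul1mx mulmx1 -!scalemxAl -!scalemxAr.
by rewrite mul_delta_mx_0 1?eq_sym // !scaler0 subr0 subrK.
Qed.

Lemma mulmx_add_delta_entry m n (M : 'M[R]_(m, n)) c (j0 j : 'I_n) i :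
  (M *m (1%:M + c *: delta_mx j0 j)) i j = M i j + c * M i j0.
Proof.
rewrite mulmxDr mulmx1 -scalemxAr !mxE (bigD1 j0) //= big1 => [|k /negPf nk].
  by rewrite !mxE !eqxx mulr1 addr0.
by rewrite !mxE nk mulr0.
Qed.

End Equivalence.

Definition monic_diagonal (R : nzRingType) m n k (D : 'M[{poly R}]_(m, n)) :=
  forall (i : 'I_m) (j : 'I_n),
    if (i < k)%N then is_true (diag_monic_entry (D i j) i j) else D i j = 0.

Lemma monic_diagonal_block (R : nzRingType) m n k (p : {poly R})
  (N : 'M[{poly R}]_(m, n)) : p \is monic -> monic_diagonal k N ->
  monic_diagonal k.+1 (block_mx (p%:M : 'M_1) 0 0 N).
Proof.
move=> mp hN i j; rewrite /diag_monic_entry.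
case: (split_ordP i) => i1 ->; case: (split_ordP j) => j1 ->.
- by rewrite block_mxEul !ord1 mxE /= mulr1n.
- by rewrite block_mxEur mxE /= ord1 add1n /=.
- by rewrite block_mxEdl mxE /= ord1 add1n /=; case: ifP.
- by rewrite block_mxEdr /= !add1n ltnS eqSS; apply: hN.
Qed.

Lemma monic_diagonal_dsubmx (R : nzRingType) m1 m2 n k
  (A : 'M[{poly R}]_(m1 + m2, n)) : (k <= m1)%N -> monic_diagonal k A -> dsubmx A = 0.
Proof.
move=> le_k dA; apply/matrixP => i j; have := dA (rshift m1 i) j.
by rewrite !mxE /= ltnNge (leq_trans le_k) ?leq_addr.
Qed.

Lemma monic_diagonal_rsubmx (R : nzRingType) m n1 n2 k
  (D : 'M[{poly R}]_(m, n1 + n2)) : (k <= n1)%N -> monic_diagonal k D -> rsubmx D = 0.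
Proof.
move=> le_k dD; apply/matrixP => i j; have := dD i (rshift n1 j).
rewrite !mxE; case: ifP => // lt_ik; rewrite /diag_monic_entry ifF => [/eqP //|].
by rewrite ltn_eqF // (leq_trans lt_ik) // (leq_trans le_k) ?leq_addr.
Qed.

Lemma monic_diagonal_lsubmx (R : nzRingType) m k n2 (D : 'M[{poly R}]_(m, k + n2)) :
  monic_diagonal k D -> forall i j, diag_monic_entry (lsubmx D i j) i j.
Proof.
move=> dD i j; have := dD i (lshift n2 j); rewrite mxE /=; case: ifP => // le_ki ->.
by rewrite /diag_monic_entry gtn_eqF // (leq_trans (ltn_ord j)) // leqNgt le_ki.
Qed.

Section EuclideanReduction.
Variable F : fieldType.

Definition corner_pivot m n (M : 'M[{poly F}]_(1 + m, 1 + n)) :=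
  [/\ M 0 0 != 0, forall j, M 0 0 %| M 0 j & forall i, M 0 0 %| M i 0].

Lemma equivalent_modp_col m n (M : 'M[{poly F}]_(m, n)) i (j0 j : 'I_n) :
  j0 != j -> exists2 N, equivalent M N & N i j = M i j %% M i j0.
Proof.
move=> nj; set c := - (M i j %/ M i j0).
exists (M *m (1%:M + c *: delta_mx j0 j)).
  by exists 1%:M, (1%:M + c *: delta_mx j0 j); rewrite mul1mx unitmx1 unitmx_add_delta.
rewrite mulmx_add_delta_entry /c mulNr {1}(divp_eq (M i j) (M i j0)).
by rewrite addrAC subrr add0r.
Qed.

Lemma equivalent_modp_row m n (M : 'M[{poly F}]_(m, n)) (i0 i : 'I_m) j :
  i0 != i -> exists2 N, equivalent M N & N i j = M i j %% M i0 j.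
Proof.
move=> ni; have [N eN Nij] := equivalent_modp_col M^T j ni.
exists N^T; last by rewrite mxE Nij !mxE.
by rewrite -[M]trmxK; apply: equivalent_tr.
Qed.

Lemma equivalent_to_corner m n (M : 'M[{poly F}]_(1 + m, 1 + n)) i j :
  exists2 N, equivalent M N & N 0 0 = M i j.
Proof.
exists (tperm_mx 0 i *m M *m tperm_mx 0 j).
  by exists (tperm_mx 0 i), (tperm_mx 0 j); rewrite !unitmx_perm.
by rewrite -xrowE -xcolE !mxE !tpermL.
Qed.

Lemma exists_corner_pivot m n (M : 'M[{poly F}]_(1 + m, 1 + n)) :
  M != 0 -> exists2 N, equivalent M N & corner_pivot N.
Proof.
suff IH s (N : 'M_(1 + m, 1 + n)) i j : equivalent M N -> N i j != 0 ->
    (size (N i j) < s)%N -> exists2 N', equivalent M N' & corner_pivot N'.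
  by case/matrix0Pn=> i [j nzMij]; apply: (IH _ M i j (equivalent_refl M) nzMij).
elim: s => // s IH in N i j *; move=> eMN nzNij ltNs.
have [N0 eN0 N0ij] := equivalent_to_corner N i j.
have {eMN eN0} eMN0 := equivalent_trans eMN eN0.
set a := N0 0 0 in N0ij *.
have nz_a : a != 0 by rewrite N0ij.
have le_a : (size a <= s)%N by rewrite N0ij -ltnS.
have descend N1 i1 j1 p : equivalent N0 N1 -> N1 i1 j1 = p %% a ->
    ~~ (a %| p) -> exists2 N', equivalent M N' & corner_pivot N'.
  move=> eN1 N1ij ndv; apply: (IH N1 i1 j1); first exact: equivalent_trans eN1.
    by rewrite N1ij; apply: contra ndv => /eqP/modp_eq0P.
  by rewrite N1ij (leq_trans _ le_a) // ltn_modp.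
case: (pickP (fun j => ~~ (a %| N0 0 j))) => [j' ndv | dvr].
  have nj : 0 != j' by apply: contraNneq ndv => <-; rewrite dvdpp.
  by have [N1 eN1 N1j] := equivalent_modp_col N0 0 nj; apply: descend eN1 N1j ndv.
case: (pickP (fun i => ~~ (a %| N0 i 0))) => [i' ndv | dvc].
  have ni : 0 != i' by apply: contraNneq ndv => <-; rewrite dvdpp.
  by have [N1 eN1 N1i] := equivalent_modp_row N0 0 ni; apply: descend eN1 N1i ndv.
exists N0 => //; split=> // [j' | i']; apply/negbFE; [exact: dvr | exact: dvc].
Qed.

Lemma equivalent_corner_block m n (M : 'M[{poly F}]_(1 + m, 1 + n)) :
  corner_pivot M -> exists W, equivalent M (block_mx (M 0 0)%:M 0 0 W).
Proof.
move=> [nz_a dvr dvc]; set a := M 0 0 in nz_a dvr dvc *.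
pose u := ursubmx M; pose v := dlsubmx M.
pose u' := map_mx (fun x => x %/ a) u; pose v' := map_mx (fun x => x %/ a) v.
have Eu : a *: u' = u.
  by apply/matrixP => i j; rewrite !mxE mulrC divpK // ord1 lshift0.
have Ev : a *: v' = v.
  by apply/matrixP => i j; rewrite !mxE mulrC divpK // ord1 lshift0.
exists (drsubmx M - v' *m u).
exists (block_mx 1%:M 0 (- v') 1%:M), (block_mx 1%:M (- u') 0 1%:M); split.
- by rewrite unitmxE det_lblock !det1 mulr1 unitr1.
- by rewrite unitmxE det_ublock !det1 mulr1 unitr1.
rewrite -[M in _ *m M *m _]submxK -/u -/v.
have -> : ulsubmx M = a%:M by rewrite [ulsubmx M]mx11_scalar !mxE !lshift0.
rewrite !mulmx_block !(mul1mx, mulmx1, mul0mx, mulmx0, addr0, add0r).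
rewrite !mulmxN !mulNmx mul_scalar_mx mul_mx_scalar Eu Ev !addNr mul0mx.
by rewrite oppr0 add0r addrC.
Qed.

Lemma equivalent_scalar_monic (a : {poly F}) :
  a != 0 -> equivalent (a%:M : 'M_1) ((lead_coef a)^-1 *: a)%:M.
Proof.
move=> nz_a; have nz_c : (lead_coef a)^-1 != 0 by rewrite invr_eq0 lead_coef_eq0.
exists ((lead_coef a)^-1%:P)%:M, 1%:M; rewrite unitmx1 mulmx1 -scalar_mxM mul_polyC.
by rewrite unitmxE det_scalar1 poly_unitE size_polyC nz_c coefC unitfE.
Qed.

Lemma diagonalization m n (M : 'M[{poly F}]_(m, n)) :
  exists k N, [/\ equivalent M N, (k <= m)%N, (k <= n)%N & monic_diagonal k N].
Proof.
elim: m n M => [|m IH] n M.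
  by exists 0%N, M; split=> //; [exact: equivalent_refl | case].
case: n M => [|n] M.
  by exists 0%N, M; split=> //; [exact: equivalent_refl | move=> i []].
have [-> | nzM] := eqVneq M 0.
  by exists 0%N, 0; split=> //; [exact: equivalent_refl | move=> i j; rewrite mxE].
have [N1 eMN1 pivN1] := exists_corner_pivot nzM.
have [W eN1W] := equivalent_corner_block pivN1.
have [k [N' [eWN' lekm lekn dN']]] := IH n W.
set a := N1 0 0 in eN1W; have nz_a : a != 0 by case: pivN1.
exists k.+1, (block_mx (((lead_coef a)^-1 *: a)%:M : 'M_1) 0 0 N').
split=> //.
  apply: (equivalent_trans eMN1 (equivalent_trans eN1W _)).
  exact: equivalent_block_diag (equivalent_scalar_monic nz_a) eWN'.
apply: monic_diagonal_block dN'.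
by rewrite monicE lead_coefZ mulVf // lead_coef_eq0.
Qed.

End EuclideanReduction.

Section Layout.
Local Open Scope nat_scope.

Lemma blk_cat s1 s2 x : blk (s1 ++ s2) x =
  if x < sumn s1 then blk s1 x else size s1 + blk s2 (x - sumn s1).
Proof.
elim: s1 x => [|y s1 IH] x /=; first by rewrite subn0.
case: ifP => ltxy; first by rewrite ifT //; lia.
rewrite IH subnDA; have -> : (x - y < sumn s1) = (x < y + sumn s1) by lia.
by case: ifP.
Qed.

Lemma boff_cat s1 s2 x : boff (s1 ++ s2) x =
  if x < sumn s1 then boff s1 x else boff s2 (x - sumn s1).
Proof.
elim: s1 x => [|y s1 IH] x /=; first by rewrite subn0.
case: ifP => ltxy; first by rewrite ifT //; lia.
rewrite IH subnDA; have -> : (x - y < sumn s1) = (x < y + sumn s1) by lia.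
by case: ifP.
Qed.

Lemma blk_ltn s x : x < sumn s -> blk s x < size s.
Proof.
by elim: s x => [|y s IH] x //=; case: ifP => // geyx ltx; rewrite ltnS IH; lia.
Qed.

Lemma row_group_RowR_ltn rP rs ss i a o :
  row_group rP rs ss i = RowR a o -> a < size rs.
Proof. by rewrite /row_group; do 2?case: ifP => // ?; case=> <- _; apply: blk_ltn. Qed.

Lemma row_group_RowS_ltn rP rs ss i a o : i < rP + sumn rs + sumn ss ->
  row_group rP rs ss i = RowS a o -> a < size ss.
Proof.
by rewrite /row_group; do 2?case: ifP => // ?; move=> lti [<- _]; apply: blk_ltn; lia.
Qed.

Lemma col_group_ColC_ltn rP m rs j b o : j < rP + m + sumn rs ->
  col_group rP m rs j = ColC b o -> b < size rs.
Proof.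
by rewrite /col_group; do 2?case: ifP => // ?; move=> ltj [<- _]; apply: blk_ltn; lia.
Qed.

(* Position i of the layout [a | k | b | rest] holds what sits at position
   swap_blocks a b k i of the layout [a | b | k | rest]. *)
Definition swap_blocks a b k i :=
  if i < a then i else if i < a + k then a + b + (i - a)
  else if i < a + k + b then i - k else i.

Lemma swap_blocks_inj a b k : injective (swap_blocks a b k).
Proof. by move=> x y; rewrite /swap_blocks; repeat case: ifP; lia. Qed.

Lemma swap_blocks_ltn a b k N i : a + b + k <= N ->
  (swap_blocks a b k i < N) = (i < N).
Proof. by rewrite /swap_blocks; repeat case: ifP; lia. Qed.

Lemma row_group_rcons_old rP rs ss k k' i t :
  swap_blocks (rP + sumn rs) (sumn ss) k i = t -> t < rP + sumn rs + sumn ss ->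
  row_group rP (rcons rs k) (rcons ss k') i = row_group rP rs ss t.
Proof.
move=> <-; rewrite /swap_blocks.
case: ifP => h1; [|case: ifP => h2; [|case: ifP => h3]] => ltr; try lia.
all: rewrite /row_group -!cats1 !sumn_cat !blk_cat !boff_cat /= ?addn0.
all: repeat case: ifP => ? //=; try lia.
by have -> : i - k - rP - sumn rs = i - rP - (sumn rs + k) by lia.
Qed.

Lemma row_group_rcons_new rP rs ss k k' i t :
  i < rP + sumn rs + sumn ss + k + k' ->
  swap_blocks (rP + sumn rs) (sumn ss) k i = rP + sumn rs + sumn ss + t ->
  row_group rP (rcons rs k) (rcons ss k') i =
  if t < k then RowR (size rs) t else RowS (size ss) (t - k).
Proof.
move=> lti; rewrite /swap_blocks.
case: ifP => h1; [|case: ifP => h2; [|case: ifP => h3]] => Et; try lia.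
all: rewrite /row_group -!cats1 !sumn_cat !blk_cat !boff_cat /= ?addn0.
all: by repeat case: ifP => ? //=; try lia; rewrite addn0; congr (_ _ _); lia.
Qed.

Lemma col_group_rcons_old rP m rs k j t :
  swap_blocks 0 k (rP + m + sumn rs) j = k + t -> t < rP + m + sumn rs ->
  col_group rP m (rcons rs k) j = col_group rP m rs t.
Proof.
rewrite /swap_blocks ltn0 !add0n subn0.
case: ifP => h1; [|case: ifP => h2] => Et ltt; try lia.
have {Et} -> : j = t by lia.
rewrite /col_group -cats1 !blk_cat !boff_cat.
by repeat case: ifP => ? //=; lia.
Qed.

Lemma col_group_rcons_new rP m rs k j t :
  swap_blocks 0 k (rP + m + sumn rs) j = t -> t < k ->
  col_group rP m (rcons rs k) j = ColC (size rs) t.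
Proof.
rewrite /swap_blocks ltn0 !add0n subn0.
case: ifP => h1; [|case: ifP => h2] => Et ltt; try lia.
rewrite /col_group -cats1 !blk_cat !boff_cat /=.
by repeat case: ifP => ? //=; try lia; rewrite addn0; congr ColC; lia.
Qed.

End Layout.

Section SwapBlocksPerm.
Variables N a b k : nat.
Hypothesis le_abk : (a + b + k <= N)%N.

Fact swap_blocks_ord_subproof (i : 'I_N) : (swap_blocks a b k i < N)%N.
Proof. by rewrite swap_blocks_ltn. Qed.

Definition swap_blocks_ord (i : 'I_N) : 'I_N := Ordinal (swap_blocks_ord_subproof i).

Lemma swap_blocks_ord_inj : injective swap_blocks_ord.
Proof. by move=> i j /(congr1 val)/swap_blocks_inj/val_inj. Qed.

Definition swap_blocks_perm : 'S_N := perm swap_blocks_ord_inj.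

Lemma swap_blocks_permE i : swap_blocks_perm i = swap_blocks a b k i :> nat.
Proof. by rewrite permE. Qed.

End SwapBlocksPerm.

Section Restack.
Variable R : nzRingType.
Variables (rP m : nat) (rs ss : seq nat) (k l' : nat).
Hypothesis size_ss : size ss = size rs.
Hypothesis le_kl : (k <= l')%N.
Local Notation r := (rP + sumn rs + sumn ss)%N.
Local Notation n' := (rP + m + sumn rs)%N.

Fact restack_rows_subproof : (rP + sumn rs + sumn ss + k <= r + l')%N.
Proof. by rewrite leq_add2l. Qed.

Fact restack_cols_subproof : (0 + k + n' <= k + n')%N.
Proof. by []. Qed.

Local Notation sr := (swap_blocks_perm restack_rows_subproof).
Local Notation sc := (swap_blocks_perm restack_cols_subproof).

(* The rows of the newly reduced block form R_(q+1) and S_(q+1), which must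
   follow R_q and S_q; its columns form C_(q+1), which must come last. *)
Definition restack (M : 'M[{poly R}]_(r + l', k + n')) := col_perm sc (row_perm sr M).

Lemma restack_perm_mx : exists (s : 'S_(r + l')) (s' : 'S_(k + n')),
  forall M, restack M = perm_mx s *m M *m perm_mx s'.
Proof.
by exists sr, sc^-1%g => M; rewrite /restack col_permE row_permE.
Qed.

Lemma restackE M i j : restack M i j = M (sr i) (sc j).
Proof. by rewrite /restack !mxE. Qed.

Lemma row_group_restack (i : 'I_(r + l')) :
  row_group rP (rcons rs k) (rcons ss (l' - k)%N) i =
  match split (sr i) with
  | inl t => row_group rP rs ss t
  | inr t => if (t < k)%N then RowR (size rs) t else RowS (size ss) (t - k)%N
  end.
Proof.
have := swap_blocks_permE restack_rows_subproof i.
case: split_ordP => t -> /= /esym Et; first exact: row_group_rcons_old Et (ltn_ord t).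
by apply: row_group_rcons_new Et; have := ltn_ord i; lia.
Qed.

Lemma col_group_restack (j : 'I_(k + n')) :
  col_group rP m (rcons rs k) j =
  match split (sc j) with
  | inl t => ColC (size rs) t
  | inr t => col_group rP m rs t
  end.
Proof.
have := swap_blocks_permE restack_cols_subproof j.
case: split_ordP => t -> /= /esym Et; first exact: col_group_rcons_new Et (ltn_ord t).
exact: col_group_rcons_old Et (ltn_ord t).
Qed.

Lemma P_form_restack (X : 'M[{poly R}]_(r, k)) (A : 'M_(r, n')) :
  P_form rP m rs ss A ->
  P_form rP m (rcons rs k) (rcons ss (l' - k)%N) (restack (block_mx X A 0 0)).
Proof.
move=> hA i j; rewrite restackE row_group_restack col_group_restack.
case: split_ordP => t ->; case: split_ordP => u ->.
- rewrite block_mxEul; case E: row_group => [o|a o|a o] //.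
    by rewrite leqNgt (row_group_RowR_ltn E).
  by rewrite leqNgt -size_ss (row_group_RowS_ltn (ltn_ord t) E).
- by rewrite block_mxEur; apply: hA.
- by rewrite block_mxEdl mxE; case: ifP.
- by rewrite block_mxEdr mxE; case: ifP; case: col_group.
Qed.

Lemma Q_form_restack (X : 'M[{poly R}]_(r, k)) (B : 'M_(r, n')) (D : 'M_(l', k)) :
  Q_form rP m rs ss B -> (forall i j, diag_monic_entry (D i j) i j) ->
  Q_form rP m (rcons rs k) (rcons ss (l' - k)%N) (restack (block_mx X B D 0)).
Proof.
move=> hB hD i j; rewrite restackE row_group_restack col_group_restack.
case: split_ordP => t ->; case: split_ordP => u ->.
- rewrite block_mxEul; case E: row_group => [o|a o|a o] //.
    by have lt_a := row_group_RowR_ltn E; rewrite ltnNge ltnW // gtn_eqF.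
  by rewrite leqNgt -size_ss (row_group_RowS_ltn (ltn_ord t) E).
- by rewrite block_mxEur; apply: hB.
- rewrite block_mxEdl; case: ifP => lt_tk /=; first by rewrite ltnn eqxx hD.
  move=> _; have := hD t u; rewrite /diag_monic_entry ifF => [/eqP //|].
  by rewrite gtn_eqF // (leq_trans (ltn_ord u)) // leqNgt lt_tk.
- rewrite block_mxEdr mxE; case: ifP => _; case E: col_group => [o||b o] //.
  by rewrite (col_group_ColC_ltn (ltn_ord u) E).
Qed.

End Restack.

Section Staircase.
Variable R : idomainType.

Definition staircase_reducible l n (P Q : 'M[{poly R}]_(l, n)) :=
  exists U V rP m rs ss, [/\ U \in unitmx, V \in unitmx, size ss = size rs,
    (rP + m + sumn rs = n)%N /\ (rP + sumn rs + sumn ss = l)%N &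
    P_form rP m rs ss (U *m P *m V) /\ Q_form rP m rs ss (U *m Q *m V)].

Lemma staircase_equivalent l n (P Q : 'M[{poly R}]_(l, n)) L U :
  L \in unitmx -> U \in unitmx ->
  staircase_reducible (L *m P *m U) (L *m Q *m U) -> staircase_reducible P Q.
Proof.
move=> uL uU [U' [V' [rP [m [rs [ss [uU' uV' size_ss dims forms]]]]]]].
exists (U' *m L), (U *m V'), rP, m, rs, ss; rewrite !unitmx_mul uU' uL uU uV'.
have E M : U' *m L *m M *m (U *m V') = U' *m (L *m M *m U) *m V'.
  by rewrite !mulmxA.
by rewrite !E.
Qed.

Lemma staircase_full_row_rank l n (A B : 'M[{poly R}]_(l, n)) :
  (l <= n)%N -> monic_diagonal l A -> staircase_reducible A B.
Proof.
move=> le_ln dA; exists 1%:M, 1%:M, l, (n - l)%N, [::], [::].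
rewrite !mul1mx !mulmx1 !unitmx1 /= !addn0 subnKC //.
split=> //; split=> // i j; rewrite /row_group ltn_ord // /col_group subnKC // ltn_ord.
have := dA i j; rewrite ltn_ord; case: ifP => // le_lj.
rewrite /diag_monic_entry ltn_eqF => [/eqP //|].
by rewrite (leq_trans (ltn_ord i)) // leqNgt le_lj.
Qed.

Lemma staircase_block r l' k n' (A1 B1 : 'M[{poly R}]_(r, k)) (A2 B2 : 'M_(r, n'))
  (D : 'M_(l', k)) : (k <= l')%N -> (forall i j, diag_monic_entry (D i j) i j) ->
  staircase_reducible A2 B2 ->
  staircase_reducible (block_mx A1 A2 0 0) (block_mx B1 B2 D 0).
Proof.
move=> le_kl hD [U [V [rP [m [rs [ss [uU uV size_ss [En' Er] [hA hB]]]]]]]].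
subst n' r; have [s [s' restackE]] := restack_perm_mx R rP m rs ss le_kl.
pose U' := block_mx U 0 0 (1%:M : 'M_l'); pose V' := block_mx (1%:M : 'M_k) 0 0 V.
exists (perm_mx s *m U'), (V' *m perm_mx s'), rP, m, (rcons rs k), (rcons ss (l' - k)%N).
have E M : perm_mx s *m U' *m M *m (V' *m perm_mx s') =
    perm_mx s *m (U' *m M *m V') *m perm_mx s'.
  by rewrite !mulmxA.
split.
- by rewrite unitmx_mul unitmx_perm unitmxE det_ublock det1 mulr1 -unitmxE.
- by rewrite unitmx_mul unitmx_perm andbT unitmxE det_ublock det1 mul1r -unitmxE.
- by rewrite !size_rcons size_ss.
- by rewrite !sumn_rcons; lia.
rewrite !E -!restackE !mulmx_block !(mul1mx, mulmx1, mul0mx, mulmx0, addr0, add0r).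
by split; [apply: P_form_restack | apply: Q_form_restack].
Qed.

End Staircase.

Section StaircaseReduction.
Variable F : fieldType.

Lemma staircase_zero_bottom r l' n (A B : 'M[{poly F}]_(r + l', n)) :
  (forall n' (A' B' : 'M[{poly F}]_(r, n')), (n' <= n)%N -> staircase_reducible A' B') ->
  dsubmx A = 0 -> staircase_reducible A B.
Proof.
move=> IH dA0.
have [k [D [[L [U [uL uU eD]]] le_kl le_kn dD]]] := diagonalization (dsubmx B).
have uL' : block_mx (1%:M : 'M_r) 0 0 L \in unitmx.
  by rewrite unitmxE det_ublock det1 mul1r -unitmxE.
apply: (staircase_equivalent uL' uU).
rewrite -[A]vsubmxK -[B]vsubmxK dA0 !mul_block_col !mul_col_mx.
rewrite !(mul1mx, mul0mx, mulmx0, addr0, add0r) eD.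
move: (usubmx A *m U) (usubmx B *m U) => X Y.
have [n' En] : exists n', n = (k + n')%N by exists (n - k)%N; rewrite subnKC.
subst n; have -> : (0 : 'M[{poly F}]_(l', k + n')) = row_mx 0 0 by rewrite row_mx0.
rewrite -[X]hsubmxK -[Y]hsubmxK -[D]hsubmxK (monic_diagonal_rsubmx _ dD) //.
rewrite -!block_mxEv; apply: staircase_block => //.
  exact: monic_diagonal_lsubmx.
by apply: IH; apply: leq_addl.
Qed.

Lemma staircase_reducible_all l n (P Q : 'M[{poly F}]_(l, n)) :
  staircase_reducible P Q.
Proof.
have [N] := ubnP (l + n); elim: N => // N IH in l n P Q *; move=> lt_lnN.
have [r [A [[L [U [uL uU eA]]] le_rl le_rn dA]]] := diagonalization P.
apply: (staircase_equivalent uL uU); rewrite eA.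
have [e_rl | ne_rl] := eqVneq r l.
  by subst r; apply: staircase_full_row_rank.
have [l' El] : exists l', l = (r + l')%N by exists (l - r)%N; rewrite subnKC.
move: (L *m Q *m U) => B; clear eA; subst l.
apply: staircase_zero_bottom (monic_diagonal_dsubmx (leqnn r) dA).
move=> n' A' B' le_n'; apply: IH.
by lia.
Qed.

End StaircaseReduction.

Lemma unitmx_unimodular (F : fieldType) k (M : 'M[{poly F}]_k) :
  M \in unitmx -> unimodular M.
Proof.
by rewrite unitmxE poly_unitE => /andP [/size_poly1P [c nz_c E] _]; exists c.
Qed.

Theorem theorem1 (R : realType) (l n : nat) (P Q : 'M[{poly R}]_(l, n)) :
  exists (U : 'M[{poly R}]_l) (V : 'M[{poly R}]_n) (rP m : nat) (rs ss : seq nat),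
    unimodular U /\ unimodular V /\ size ss = size rs /\
    (rP + m + sumn rs)%N = n /\ (rP + sumn rs + sumn ss)%N = l /\
    P_form rP m rs ss (U *m P *m V) /\ Q_form rP m rs ss (U *m Q *m V).
Proof.
have [U [V [rP [m [rs [ss [uU uV size_ss [En El] [hP hQ]]]]]]]] :=
  staircase_reducible_all P Q.
exists U, V, rP, m, rs, ss.
by do ![split | exact: unitmx_unimodular].
Qed.
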